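(* Let $\gamma\in(1,2]$, $a>0$ and $u\in\mathbb R^3$, and let $$g(\lambda)=\lambda^3-\frac1{4\gamma}\big(4a^4+4a^2+\gamma(|u|^2+2)^2\big)\lambda^2+\frac{a^2}{4\gamma^2}\Big(4a^4-4a^2+\gamma\big[4(|u|^2+1)a^2+(|u|^2+2)^2\big]\Big)\lambda-\frac{a^6(\gamma-1)}{\gamma^3}.$$ Assume $g$ has three positive real roots $0<\lambda_1<\lambda_2<\lambda_3$. Then $$\lambda_1\ge\frac{a^2(\gamma-1)}{\gamma}\min\Big(\frac{a^2}{\gamma(|u|^2+2)^2},\ \frac1{4(a^2+1)},\ \frac1{4\gamma(|u|^2+1)}\Big).$$ *)

From mathcomp Require Import all_boot all_order all_algebra.
From mathcomp Require Import reals.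
Set Implicit Arguments. Unset Strict Implicit. Unset Printing Implicit Defensive.
Import Order.TTheory GRing.Theory Num.Theory.
Local Open Scope ring_scope.

Definition sqnorm3 {R : realType} (u : 'rV[R]_3) : R := \sum_(i < 3) u 0 i ^+ 2.

Definition gcubic {R : realType} (gam a : R) (u : 'rV[R]_3) (l : R) : R :=
  let s := sqnorm3 u in
  l ^+ 3
  - (4 * a ^+ 4 + 4 * a ^+ 2 + gam * (s + 2) ^+ 2) / (4 * gam) * l ^+ 2
  + a ^+ 2 / (4 * gam ^+ 2)
      * (4 * a ^+ 4 - 4 * a ^+ 2 + gam * (4 * (s + 1) * a ^+ 2 + (s + 2) ^+ 2)) * l
  - a ^+ 6 * (gam - 1) / gam ^+ 3.

From mathcomp Require Import all_boot all_order all_algebra.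
From mathcomp Require Import reals.
From mathcomp Require Import ring lra.

Set Implicit Arguments.
Unset Strict Implicit.
Unset Printing Implicit Defensive.
Import Order.TTheory GRing.Theory Num.Theory.
Local Open Scope ring_scope.

(* Writing g(λ) = λ^3 - B λ^2 + C λ - D, Vieta's formulas give C = λ1λ2 + λ1λ3 + λ2λ3 > 0
   and D = λ1λ2λ3 <= λ1 C, so λ1 >= D / C = 4 a^4 (γ - 1) / (γ E), where E is the bracket
   in the linear coefficient.  Each of the three terms in the minimum controls one part of E,
   and together they give min * E <= 4 a^2, which is the claim. *)

Definition cubic {R : pzRingType} (B C D x : R) := x ^+ 3 - B * x ^+ 2 + C * x - D.

Section CubicVieta.

Variables (R : idomainType) (B C D : R).

Lemma cubic_root_pair (x y : R) : x != y -> cubic B C D x = 0 -> cubic B C D y = 0 ->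
  x ^+ 2 + x * y + y ^+ 2 - B * (x + y) + C = 0.
Proof.
move=> nxy hx hy.
have factor : (x - y) * (x ^+ 2 + x * y + y ^+ 2 - B * (x + y) + C)
              = cubic B C D x - cubic B C D y by rewrite /cubic; ring.
move: factor; rewrite hx hy subrr => /eqP.
by rewrite mulf_eq0 subr_eq0 (negbTE nxy) => /eqP.
Qed.

Lemma cubic_vieta (x y z : R) : x != y -> x != z -> y != z ->
  cubic B C D x = 0 -> cubic B C D y = 0 -> cubic B C D z = 0 ->
  [/\ B = x + y + z, C = x * y + x * z + y * z & D = x * y * z].
Proof.
move=> nxy nxz nyz hx hy hz.
have exy := cubic_root_pair nxy hx hy.
have exz := cubic_root_pair nxz hx hz.
have eB : B = x + y + z.
  have factor : (y - z) * (x + y + z - B)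
    = (x ^+ 2 + x * y + y ^+ 2 - B * (x + y) + C)
      - (x ^+ 2 + x * z + z ^+ 2 - B * (x + z) + C) by ring.
  move: factor; rewrite exy exz subrr => /eqP.
  by rewrite mulf_eq0 subr_eq0 (negbTE nyz) subr_eq0 => /eqP.
have eC : C = x * y + x * z + y * z.
  by apply/eqP; rewrite -subr_eq0 -exy eB; apply/eqP; ring.
split=> //; apply/eqP; rewrite -subr_eq0 -oppr_eq0 -hx /cubic eB eC; apply/eqP; ring.
Qed.

End CubicVieta.

Lemma cubic_pos_root_ge (R : realFieldType) (B C D x y z : R) :
  0 < x -> 0 < y -> 0 < z -> x != y -> x != z -> y != z ->
  cubic B C D x = 0 -> cubic B C D y = 0 -> cubic B C D z = 0 ->
  D / C <= x.
Proof.
move=> x0 y0 z0 nxy nxz nyz hx hy hz.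
have [_ -> ->] := cubic_vieta nxy nxz nyz hx hy hz.
rewrite ler_pdivrMr; last by rewrite !addr_gt0 ?mulr_gt0.
by rewrite mulrDr -mulrA ler_wpDl // ltW // !(mulr_gt0, addr_gt0).
Qed.

Lemma sqnorm3_ge0 (R : realType) (u : 'rV[R]_3) : 0 <= sqnorm3 u.
Proof. by apply: sumr_ge0 => i _; exact: sqr_ge0. Qed.

Definition glin {R : pzRingType} (gam a s : R) :=
  4 * a ^+ 4 - 4 * a ^+ 2 + gam * (4 * (s + 1) * a ^+ 2 + (s + 2) ^+ 2).

Lemma gcubicE (R : realType) (gam a : R) (u : 'rV[R]_3) (l : R) :
  gcubic gam a u l =
  cubic ((4 * a ^+ 4 + 4 * a ^+ 2 + gam * (sqnorm3 u + 2) ^+ 2) / (4 * gam))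
        (a ^+ 2 / (4 * gam ^+ 2) * glin gam a (sqnorm3 u))
        (a ^+ 6 * (gam - 1) / gam ^+ 3) l.
Proof. by []. Qed.

Lemma glin_gt0 (R : realFieldType) (gam a s : R) : 1 <= gam -> 0 <= s -> 0 < glin gam a s.
Proof.
move=> g1 s0; rewrite /glin.
have lin : a ^+ 2 <= gam * (s + 1) * a ^+ 2 by rewrite ler_peMl //; nra.
have quad : 4 <= gam * (s + 2) ^+ 2 by nra.
nra.
Qed.

Lemma mul_glin_le (R : realFieldType) (gam a s m : R) : 0 < gam -> 0 <= s -> 0 <= m ->
  m <= a ^+ 2 / (gam * (s + 2) ^+ 2) -> m <= 1 / (4 * (a ^+ 2 + 1)) ->
  m <= 1 / (4 * gam * (s + 1)) ->
  m * glin gam a s <= 4 * a ^+ 2.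
Proof.
move=> g0 s0 m0 h1 h2 h3.
have a2 : 0 <= a ^+ 2 by exact: sqr_ge0.
have q1 : m * (gam * (s + 2) ^+ 2) <= a ^+ 2.
  by rewrite -ler_pdivlMr // mulr_gt0 // exprn_gt0 // ltr_wpDl.
have q2 : m * (4 * (a ^+ 2 + 1)) * a ^+ 2 <= a ^+ 2.
  by rewrite ler_piMl // -ler_pdivlMr // mulr_gt0 // ltr_wpDl.
have q3 : m * (4 * gam * (s + 1)) * a ^+ 2 <= a ^+ 2.
  by rewrite ler_piMl // -ler_pdivlMr // !mulr_gt0 // ltr_wpDl.
rewrite /glin -[a ^+ 4]/(a ^+ (2 + 2)) exprD.
nra.
Qed.

Theorem lemmaB2 (R : realType) (gam a : R) (u : 'rV[R]_3) (l1 l2 l3 : R) :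
  1 < gam -> gam <= 2 -> 0 < a ->
  0 < l1 -> l1 < l2 -> l2 < l3 ->
  gcubic gam a u l1 = 0 -> gcubic gam a u l2 = 0 -> gcubic gam a u l3 = 0 ->
  a ^+ 2 * (gam - 1) / gam
    * Num.min (a ^+ 2 / (gam * (sqnorm3 u + 2) ^+ 2))
        (Num.min (1 / (4 * (a ^+ 2 + 1))) (1 / (4 * gam * (sqnorm3 u + 1))))
  <= l1.
Proof.
rewrite !gcubicE => g1 _ a0 l10 l12 l23 h1 h2 h3.
have s0 := sqnorm3_ge0 u; set s := sqnorm3 u in s0 h1 h2 h3 *.
have g0 : 0 < gam by apply: lt_trans g1.
have l20 := lt_trans l10 l12; have l30 := lt_trans l20 l23.
have l1_ge := cubic_pos_root_ge l10 l20 l30 (negbT (lt_eqF l12))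
  (negbT (lt_eqF (lt_trans l12 l23))) (negbT (lt_eqF l23)) h1 h2 h3.
apply: le_trans l1_ge; rewrite ler_pdivlMr; last first.
  by rewrite mulr_gt0 ?divr_gt0 ?glin_gt0 ?mulr_gt0 ?exprn_gt0 // ltW.
set m := Num.min _ _.
have m0 : 0 <= m.
  by rewrite !le_min !divr_ge0 ?mulr_ge0 ?addr_ge0 ?sqr_ge0 // ltW.
have mE : m * glin gam a s <= 4 * a ^+ 2.
  by apply: mul_glin_le; rewrite // /m ?ge_min lexx ?orbT.
pose K := a ^+ 2 * (gam - 1) / gam * (a ^+ 2 / (4 * gam ^+ 2)).
have K0 : 0 <= K.
  by apply: mulr_ge0; apply: divr_ge0; rewrite ?mulr_ge0 ?subr_ge0 ?sqr_ge0 // ltW.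
have gam_neq0 : gam != 0 by rewrite gt_eqF.
have -> : a ^+ 2 * (gam - 1) / gam * m * (a ^+ 2 / (4 * gam ^+ 2) * glin gam a s)
          = K * (m * glin gam a s) by rewrite /K; field.
have -> : a ^+ 6 * (gam - 1) / gam ^+ 3 = K * (4 * a ^+ 2) by rewrite /K; field.
exact: (ler_wpM2l K0 mE).
Qed.
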